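(* Let $G$ be a graph, let $X$ be a partition parameter defined by property $x$, and let $\mathcal Y=\{Y_i\}_{i=1}^m$ be a partition of $V(G)$ having property $x$ such that $|\mathcal Y|=X(G)$. Then the following are equivalent: (1) $\mathcal{R}^{\mathrm{TE}}_X(G)\cong K_{|Y_1|}\,\square\,\cdots\,\square\,K_{|Y_m|}$; (2) $\mathcal{R}^{\mathrm{TS}}_X(G)\cong G[Y_1]\,\square\,\cdots\,\square\,G[Y_m]$; (3) $\mathcal Y$ is the unique partition of $V(G)$ having property $x$ with $|\mathcal Y|=X(G)$.
   Context: All graphs are finite and simple; $\square$ is the Cartesian product and $G[Y]$ the induced subgraph. A graph parameter $X$ is a partition parameter defined by property $x$ if for every graph $G$, $X(G)$ equals either (for every graph) the maximum, or (for every graph) the minimum, of $|\mathcal Y|$ over partitions $\mathcal Y$ of $V(G)$ having property $x$ in $G$. A set $B\subseteq V(G)$ is a transversal of a partition $\mathcal Y$ if $|Y\cap B|=1$ for every $Y\in\mathcal Y$. For a partition parameter $X$, the reconfiguration graphs are those of the associated transversal vertex parameter: $\mathcal{R}^{\mathrm{TE}}_X(G)$ has as vertices all transversals $B$ of partitions of $V(G)$ having property $x$ with $|B|=X(G)$, and $B_1B_2$ is an edge iff there exist $v_1\in B_1\setminus B_2$, $v_2\in B_2\setminus B_1$ with $B_1\setminus\{v_1\}=B_2\setminus\{v_2\}$; $\mathcal{R}^{\mathrm{TS}}_X(G)$ has the same vertex set, with the additional adjacency requirement $v_1v_2\in E(G)$. *)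

From HB Require Import structures.
From mathcomp Require Import all_boot.

Set Implicit Arguments.
Unset Strict Implicit.
Unset Printing Implicit Defensive.

Record fgraph := FGraph { gV : finType; gE : rel gV }.

Definition graph_iso (G H : fgraph) : Prop :=
  exists f : gV G -> gV H, bijective f /\ forall u v, @gE G u v = @gE H (f u) (f v).

Definition Kgraph (n : nat) : fgraph := @FGraph 'I_n (fun i j => i != j).

Definition unit_graph : fgraph := @FGraph unit (fun _ _ => false).

Definition cart_prod (G H : fgraph) : fgraph :=
  @FGraph (gV G * gV H)%type
    (fun u v => (@gE G u.1 v.1 && (u.2 == v.2)) || ((u.1 == v.1) && @gE H u.2 v.2)).

Definition cart_prod_seq (gs : seq fgraph) : fgraph := foldr cart_prod unit_graph gs.

Definition induced (T : finType) (e : rel T) (Y : {set T}) : fgraph :=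
  @FGraph {x : T | x \in Y} (fun u v => e (val u) (val v)).

Definition is_vpartition (T : finType) (Y : {set {set T}}) : bool :=
  partition Y [set: T].

Definition transversal_of (T : finType) (Y : {set {set T}}) (B : {set T}) : bool :=
  [forall A in Y, #|A :&: B| == 1].

(* k = X(G), where X is the partition parameter defined by the property x
   (x Y means "the partition Y of V(G) has property x in G"),
   and X(G) is either the maximum (ismax = true) or the minimum (ismax = false)
   of |Y| over partitions Y of V(G) having property x. *)
Definition param_value (T : finType) (x : {set {set T}} -> bool) (ismax : bool)
    (k : nat) : Prop :=
  (exists Y, [/\ is_vpartition Y, x Y & #|Y| = k]) /\
  (forall Y, is_vpartition Y -> x Y -> if ismax then #|Y| <= k else k <= #|Y|).

Definition rvert (T : finType) (x : {set {set T}} -> bool) (k : nat) (B : {set T}) : bool :=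
  [exists Y : {set {set T}}, [&& is_vpartition Y, x Y & transversal_of Y B]] && (#|B| == k).

Definition te_adj (T : finType) (B1 B2 : {set T}) : bool :=
  [exists v1 in B1 :\: B2, exists v2 in B2 :\: B1, B1 :\ v1 == B2 :\ v2].

Definition ts_adj (T : finType) (e : rel T) (B1 B2 : {set T}) : bool :=
  [exists v1 in B1 :\: B2, exists v2 in B2 :\: B1, (B1 :\ v1 == B2 :\ v2) && e v1 v2].

Definition RTE (T : finType) (x : {set {set T}} -> bool) (k : nat) : fgraph :=
  @FGraph {B : {set T} | rvert x k B} (fun B1 B2 => te_adj (val B1) (val B2)).

Definition RTS (T : finType) (e : rel T) (x : {set {set T}} -> bool) (k : nat) : fgraph :=
  @FGraph {B : {set T} | rvert x k B} (fun B1 B2 => ts_adj e (val B1) (val B2)).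

From Pilot Require Import Defs.
From HB Require Import structures.
From mathcomp Require Import all_boot.

Set Implicit Arguments.
Unset Strict Implicit.
Unset Printing Implicit Defensive.

(* A transversal of the optimal partition Y_1, ..., Y_m is a choice of one
   token in each part, i.e. a vertex of G[Y_1] [] ... [] G[Y_m] (or of
   K_|Y_1| [] ... [] K_|Y_m|), and moving a single token changes exactly one
   coordinate.  So the product is always isomorphic to the subgraph of the
   reconfiguration graph on the transversals of Y, and, counting vertices, the
   whole reconfiguration graph is isomorphic to the product iff every vertex is
   a transversal of Y.  This holds iff Y is the only optimal partition: an
   optimal partition all of whose transversals are transversals of Y is refined
   by Y and has as many parts, hence equals Y. *)

Section VertexPartitions.
Variable T : finType.
Implicit Types (P Q : {set {set T}}) (B : {set T}).

Lemma vpartition_cover P x : is_vpartition P -> x \in cover P.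
Proof. by move=> /cover_partition ->; rewrite inE. Qed.

Lemma pblock_vpartition P x : is_vpartition P -> pblock P x \in P.
Proof. by move=> /(vpartition_cover x) /pblock_mem. Qed.

Lemma mem_pblock_vpartition P x : is_vpartition P -> x \in pblock P x.
Proof. by move=> /(vpartition_cover x); rewrite mem_pblock. Qed.

Lemma vpartition_pblocks P : is_vpartition P -> [set pblock P x | x : T] = P.
Proof.
move=> hP; apply/setP => A; apply/imsetP/idP => [[y _ ->] | AP].
  exact: pblock_vpartition.
have /set0Pn[y Ay] := partition_neq0 hP AP.
by exists y; rewrite ?(def_pblock (partition_trivIset hP) AP Ay).
Qed.

Lemma card_vtransversal P B :
  is_vpartition P -> transversal_of P B -> #|B| = #|P|.
Proof.
move=> hP /forall_inP trB; apply: (@card_transversal _ B P [set: T]).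
rewrite /is_transversal -/(is_vpartition P) hP subsetT; apply/forall_inP => A AP.
by rewrite setIC trB.
Qed.

Lemma vtransversal_through P u v :
  is_vpartition P -> pblock P u != pblock P v ->
  exists B, [/\ transversal_of P B, u \in B & v \in B].
Proof.
move=> hP Nuv; have tiP := partition_trivIset hP.
pose g (A : {set T}) := if u \in A then u else if v \in A then v
                        else odflt u [pick y in A].
have gA A : A \in P -> g A \in A.
  move=> AP; rewrite /g; case: ifP => // _; case: ifP => // _.
  have /set0Pn[y Ay] := partition_neq0 hP AP.
  by case: pickP => //= /(_ y); rewrite Ay.
exists (g @: P); split.
- apply/forall_inP => A AP; apply/cards1P; exists (g A); apply/setP => z.
  rewrite !inE; apply/andP/eqP => [[zA /imsetP[A' A'P Ez]] | ->].
    subst z; by rewrite -(def_pblock tiP AP zA) (def_pblock tiP A'P (gA _ A'P)).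
  by rewrite gA ?imset_f.
- apply/imsetP; exists (pblock P u); first exact: pblock_vpartition.
  by rewrite /g mem_pblock_vpartition.
- apply/imsetP; exists (pblock P v); first exact: pblock_vpartition.
  rewrite /g mem_pblock_vpartition //; case: ifP => // /(same_pblock tiP) Euv.
  by rewrite Euv eqxx in Nuv.
Qed.

Lemma vpartition_refines P Q :
    is_vpartition P -> is_vpartition Q ->
    (forall B, transversal_of P B -> transversal_of Q B) ->
  forall a b, pblock Q a = pblock Q b -> pblock P a = pblock P b.
Proof.
move=> hP hQ trPQ a b EQab; apply/eqP; apply: contraT => NPab.
have [B [/trPQ /forall_inP trB aB bB]] := vtransversal_through hP NPab.
have /cards1P[c Qc] := trB _ (pblock_vpartition a hQ).
have : a \in [set c] by rewrite -Qc inE mem_pblock_vpartition.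
have : b \in [set c] by rewrite -Qc inE EQab mem_pblock_vpartition.
by rewrite !inE => /eqP Ebc /eqP Eac; rewrite Eac Ebc eqxx in NPab.
Qed.

Lemma eq_vpartition_of_refines P Q :
    is_vpartition P -> is_vpartition Q -> #|P| = #|Q| ->
    (forall a b, pblock Q a = pblock Q b -> pblock P a = pblock P b) ->
  P = Q.
Proof.
move=> hP hQ cardPQ refQP; have tiQ := partition_trivIset hQ.
(* [h] sends each block of [Q] to the block of [P] containing it; it maps [Q]
   onto [P], and injectively since [#|P| = #|Q|]. *)
pose h (A : {set T}) := \bigcup_(y in A) pblock P y.
have hQP a : h (pblock Q a) = pblock P a.
  apply/eqP; rewrite eqEsubset (bigcup_sup a) ?mem_pblock_vpartition // andbT.
  by apply/bigcupsP => y /(same_pblock tiQ) /refQP ->.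
have im_h : h @: Q = P.
  rewrite -{1}(vpartition_pblocks hQ) -imset_comp -[RHS]vpartition_pblocks //.
  exact: eq_imset.
have inj_h : {in Q &, injective h} by apply/imset_injP; rewrite im_h cardPQ.
have EPQ x : pblock P x = pblock Q x.
  apply/setP => y; rewrite -!eq_pblock ?vpartition_cover ?(partition_trivIset hP) //.
  apply/eqP/eqP => [| /refQP //]; rewrite -!hQP => /inj_h; apply;
    exact: pblock_vpartition.
by rewrite -(vpartition_pblocks hP) -(vpartition_pblocks hQ); apply: eq_imset.
Qed.

Lemma eq_vpartition_of_transversal P Q :
    is_vpartition P -> is_vpartition Q -> #|P| = #|Q| ->
    (forall B, transversal_of P B -> transversal_of Q B) ->
  P = Q.
Proof.
move=> hP hQ cardPQ trPQ.
exact: eq_vpartition_of_refines (vpartition_refines hP hQ trPQ).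
Qed.

End VertexPartitions.

Lemma setIU1_notin (T : finType) (A B : {set T}) y :
  y \notin A -> A :&: (y |: B) = A :&: B.
Proof.
by move=> yA; apply/setP => z; rewrite !inE; case: eqP => // ->; rewrite (negPf yA).
Qed.

Section TokenMoves.
Variables (T : finType) (R : rel T).
Implicit Types (u w : T) (D : {set T}).

Lemma ts_adj_setU1 u D1 D2 : u \notin D1 -> u \notin D2 ->
  ts_adj R (u |: D1) (u |: D2) = ts_adj R D1 D2.
Proof.
move=> uD1 uD2.
have EdiffD D D' : u \notin D -> (u |: D) :\: (u |: D') = D :\: D'.
  move=> uD; apply/setP => z; rewrite !inE.
  by case: eqP => // ->; rewrite (negPf uD) andbF.
have EsetD1 D z : z \in D -> u \notin D -> (u |: D) :\ z = u |: (D :\ z).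
  move=> zD uD; rewrite setDUl (setDidPl _) // disjoint_sym disjoints1 inE.
  by apply: contra uD => /eqP <-.
rewrite /ts_adj !EdiffD //; apply: eq_existsb => v1; apply: andb_id2l => /setDP[v1D1 _].
apply: eq_existsb => v2; apply: andb_id2l => /setDP[v2D2 _]; congr (_ && _).
rewrite !EsetD1 //; apply/eqP/eqP => [/(congr1 (fun A => A :\ u)) | -> //].
by rewrite !setU1K // !inE negb_and ?uD1 ?uD2 orbT.
Qed.

Lemma ts_adj_setU1_neq u w D1 D2 :
    u != w -> u \notin D1 -> u \notin D2 -> w \notin D1 -> w \notin D2 ->
  ts_adj R (u |: D1) (w |: D2) = R u w && (D1 == D2).
Proof.
move=> uw uD1 uD2 wD1 wD2; rewrite /ts_adj.
apply/exists_inP/andP => [[v1 _ /exists_inP[v2 _ /andP[/eqP EB Rv]]] | [Ruw /eqP <-]].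
  move/setP: (EB) => EBz.
  have v1u : v1 = u.
    move: (EBz u); rewrite !inE eqxx (negPf uw) (negPf uD2) /= andbT andbF.
    by move/negbFE/eqP.
  have v2w : v2 = w.
    move: (EBz w); rewrite !inE eqxx (eq_sym w u) (negPf uw) (negPf wD1) /= andbF andbT.
    by move/esym/negbFE/eqP.
  subst; split=> //; apply/eqP; move: EB; rewrite !setU1K //.
exists u; first by rewrite !inE eqxx (negPf uw) (negPf uD1).
apply/exists_inP; exists w.
  by rewrite !inE eqxx (eq_sym w u) (negPf uw) (negPf wD1).
by rewrite !setU1K // eqxx.
Qed.

End TokenMoves.

Lemma te_adjE (T : finType) (B1 B2 : {set T}) :
  te_adj B1 B2 = ts_adj (fun _ _ => true) B1 B2.
Proof.
rewrite /te_adj /ts_adj; apply: eq_existsb => v1; congr (_ && _).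
by apply: eq_existsb => v2; rewrite andbT.
Qed.

Section Reconfiguration.
Variables (T : finType) (x : {set {set T}} -> bool) (k : nat).

Lemma graph_iso_RTE (H : Defs.fgraph) :
  graph_iso (RTE x k) H <-> graph_iso (RTS (fun _ _ => true) x k) H.
Proof.
by split=> -[f [bij_f adj_f]]; exists f; split=> // u v; rewrite -adj_f /= te_adjE.
Qed.

Lemma rvert_transversal Y B :
  is_vpartition Y -> x Y -> #|Y| = k -> transversal_of Y B -> rvert x k B.
Proof.
move=> hY xY cardY trB; apply/andP; split.
  by apply/existsP; exists Y; rewrite hY xY trB.
by rewrite (card_vtransversal hY trB) cardY.
Qed.

Lemma rvert_transversal_iff_unique Y0 :
    is_vpartition Y0 -> #|Y0| = k ->
  (forall B, rvert x k B -> transversal_of Y0 B) <->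
  (forall Y, is_vpartition Y -> x Y -> #|Y| = k -> Y = Y0).
Proof.
move=> hY0 cardY0; split=> [trY0 Y hY xY cardY | uniqY0 B].
  apply: eq_vpartition_of_transversal => //; first by rewrite cardY cardY0.
  by move=> B trB; apply/trY0/(rvert_transversal hY xY cardY).
case/andP=> /existsP[Y /and3P[hY xY trB]] /eqP cardB.
by rewrite -(uniqY0 Y) // -(card_vtransversal hY trB).
Qed.

End Reconfiguration.

Section ProductOfParts.
Variables (T I : finType) (Ys : I -> {set T}).
Hypothesis Ys_disj : forall i j y, y \in Ys i -> y \in Ys j -> i = j.
Local Notation Y0 := [set Ys i | i : I].
Variables (x : {set {set T}} -> bool) (k : nat).
Hypotheses (Y0_part : is_vpartition Y0) (Y0_x : x Y0) (Y0_k : #|Y0| = k).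

Lemma notin_part_other i j (s : seq I) y :
  i \notin s -> j \in s -> y \in Ys i -> y \notin Ys j.
Proof. by move=> Nis js yi; apply/negP => /(Ys_disj yi) Eij; rewrite Eij js in Nis. Qed.

Lemma notin_bigcup_parts i s y :
  i \notin s -> y \in Ys i -> y \notin \bigcup_(j <- s) Ys j.
Proof.
move=> Nis yi; rewrite bigcup_seq; apply/bigcupP => -[j js].
exact/negP/(notin_part_other Nis js yi).
Qed.

Definition parts_transversal (s : seq I) (B : {set T}) : bool :=
  (B \subset \bigcup_(i <- s) Ys i) && all (fun i => #|Ys i :&: B| == 1) s.

Lemma parts_transversal_enum B : parts_transversal (enum I) B = transversal_of Y0 B.
Proof.
rewrite /parts_transversal; have -> /= : B \subset \bigcup_(i <- enum I) Ys i.
  apply/subsetP => y _; rewrite bigcup_seq.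
  have /bigcupP[_ /imsetP[i _ ->] yi] := vpartition_cover y Y0_part.
  by apply/bigcupP; exists i; rewrite ?mem_enum.
apply/allP/forall_inP => [trB _ /imsetP[i _ ->] | trB i _]; first exact/trB/mem_enum.
exact/trB/imset_f.
Qed.

Section Tokens.
Variables (F : I -> Defs.fgraph) (f : forall i, gV (F i) -> T) (R : rel T).
Arguments f : clear implicits.
Hypothesis f_inj : forall i, injective (f i).
Hypothesis f_mem : forall i a, f i a \in Ys i.
Hypothesis f_onto : forall i y, y \in Ys i -> exists a, f i a = y.
Hypothesis gE_F : forall i a b, @gE (F i) a b = (f i a != f i b) && R (f i a) (f i b).

Local Notation prod s := (gV (cart_prod_seq (map F s))).

Fixpoint tokens (s : seq I) : prod s -> {set T} :=
  match s return prod s -> {set T} with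
  | [::] => fun _ => set0
  | i :: s' => fun p => f i p.1 |: @tokens s' p.2
  end.
Arguments tokens : clear implicits.

Lemma tokens_sub s p : tokens s p \subset \bigcup_(i <- s) Ys i.
Proof.
elim: s p => [|i s IHs] p /=; first exact: sub0set.
by rewrite big_cons setUSS ?sub1set.
Qed.

Lemma notin_tokens i s p y : i \notin s -> y \in Ys i -> y \notin tokens s p.
Proof.
by move=> Nis yi; apply: contra (notin_bigcup_parts Nis yi); apply/subsetP/tokens_sub.
Qed.

Lemma part_tokens_cons i s a p :
  i \notin s -> Ys i :&: (f i a |: tokens s p) = [set f i a].
Proof.
move=> Nis; apply/setP => y; rewrite !inE.
case: eqP => [-> | _]; first by rewrite f_mem.
by apply/andP => -[yi]; apply/negP/(notin_tokens p Nis yi).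
Qed.

Lemma tokens_transversal s p : uniq s -> parts_transversal s (tokens s p).
Proof.
rewrite /parts_transversal tokens_sub /=.
elim: s p => [// | i s IHs] [a p] /andP[Nis us] /=.
rewrite part_tokens_cons // cards1 eqxx /=; apply/allP => j js.
rewrite setIU1_notin ?(notin_part_other Nis js (f_mem a)) //.
exact: (allP (IHs p us)).
Qed.

Lemma tokens_inj s : uniq s -> injective (tokens s).
Proof.
elim: s => [_ [] [] // | i s IHs /andP[Nis us] [a p] [b q] /= Eab].
have /set1_inj/f_inj Eab1 : [set f i a] = [set f i b].
  by rewrite -(part_tokens_cons a p Nis) -(part_tokens_cons b q Nis) Eab.
have Eab2 : tokens s p = tokens s q.
  rewrite -(setU1K (notin_tokens p Nis (f_mem a))) Eab Eab1.
  by rewrite setU1K ?(notin_tokens q Nis (f_mem b)).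
by rewrite Eab1 (IHs us _ _ Eab2).
Qed.

Lemma tokens_onto s B : uniq s -> parts_transversal s B -> exists p, tokens s p = B.
Proof.
elim: s B => [|i s IHs] B.
  by move=> _ /andP[+ _]; rewrite big_nil subset0 => /eqP ->; exists tt.
case/andP=> Nis us /andP[sB /andP[/cards1P[y Yi_B] trB]].
have /setIP[yi yB] : y \in Ys i :&: B by rewrite Yi_B set11.
have [p Ep] : exists p, tokens s p = B :\ y.
  apply: IHs => //; apply/andP; split.
    apply/subsetP => z /setD1P[Nzy zB]; move/subsetP/(_ z zB): sB.
    rewrite big_cons inE => /orP[zi | //].
    have : z \in Ys i :&: B by rewrite inE zi.
    by rewrite Yi_B inE (negPf Nzy).
  apply/allP => j js; rewrite -(setIU1_notin _ (notin_part_other Nis js yi)).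
  by rewrite setD1K //; apply: (allP trB).
have [a Ea] := f_onto yi.
by exists (a, p); rewrite /= Ep Ea setD1K.
Qed.

Lemma tokens_adj s p q : uniq s ->
  @gE (cart_prod_seq (map F s)) p q = ts_adj R (tokens s p) (tokens s q).
Proof.
elim: s p q => [[] [] _ | i s IHs [a p] [b q] /andP[Nis us]] /=.
  by apply/esym/negbTE/exists_inP => -[v]; rewrite setDv inE.
have NaT c r : f i c \notin tokens s r by apply: notin_tokens (f_mem c).
rewrite gE_F IHs // (inj_eq (@f_inj i)); have [<- | Nab] /= := eqP.
  by rewrite ts_adj_setU1.
rewrite ts_adj_setU1_neq ?(inj_eq (@f_inj i)) //; last exact/eqP.
by rewrite (inj_eq (tokens_inj us)) orbF.
Qed.

Lemma rvert_tokens p : rvert x k (tokens (enum I) p).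
Proof.
apply: rvert_transversal Y0_part Y0_x Y0_k _.
by rewrite -parts_transversal_enum tokens_transversal ?enum_uniq.
Qed.

Definition token_vertex (p : prod (enum I)) : gV (RTS R x k) :=
  exist _ (tokens (enum I) p) (rvert_tokens p).

Lemma token_vertex_inj : injective token_vertex.
Proof. by move=> p q /(congr1 val) /(tokens_inj (enum_uniq I)). Qed.

Lemma bijective_token_vertex :
  bijective token_vertex <-> (forall B, rvert x k B -> transversal_of Y0 B).
Proof.
split=> [[g _ gK] B rB | trY0].
  have <- : val (token_vertex (g (exist _ B rB))) = B by rewrite gK.
  by rewrite -parts_transversal_enum tokens_transversal ?enum_uniq.
apply: inj_card_bij token_vertex_inj _.
rewrite -(card_codom token_vertex_inj); apply/subset_leq_card/subsetP => -[B rB] _.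
have [p Ep] : exists p, tokens (enum I) p = B.
  by apply: tokens_onto (enum_uniq I) _; rewrite parts_transversal_enum trY0.
by apply/codomP; exists p; apply: val_inj.
Qed.

Lemma RTS_iso_prod_iff :
  graph_iso (RTS R x k) (cart_prod_seq (map F (enum I))) <->
  (forall Y, is_vpartition Y -> x Y -> #|Y| = k -> Y = Y0).
Proof.
apply: (iff_trans _ (rvert_transversal_iff_unique x Y0_part Y0_k)).
apply: (iff_trans _ bijective_token_vertex).
(* Any isomorphism equates the numbers of vertices, so the injection
   [token_vertex] is onto. *)
split=> [[g [/bij_eq_card card_g _]] | [g tvK gK]].
  by apply: inj_card_bij token_vertex_inj _; rewrite card_g.
exists g; split=> [|u v]; first by exists token_vertex.
by rewrite -{1}(gK u) -{1}(gK v) /= tokens_adj ?enum_uniq.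
Qed.

End Tokens.

Lemma RTE_iso_iff :
  graph_iso (RTE x k) (cart_prod_seq [seq Kgraph #|Ys i| | i <- enum I]) <->
  (forall Y, is_vpartition Y -> x Y -> #|Y| = k -> Y = Y0).
Proof.
apply: iff_trans (graph_iso_RTE _ _ _) _.
apply: (@RTS_iso_prod_iff (fun i => Kgraph #|Ys i|) (fun i a => enum_val a)).
- by move=> i; apply: enum_val_inj.
- by move=> i a; apply: enum_valP.
- by move=> i y yi; exists (enum_rank_in yi y); rewrite enum_rankK_in.
- by move=> i a b; rewrite andbT (inj_eq enum_val_inj).
Qed.

Lemma RTS_iso_iff (e : rel T) : irreflexive e ->
  graph_iso (RTS e x k) (cart_prod_seq [seq induced e (Ys i) | i <- enum I]) <->
  (forall Y, is_vpartition Y -> x Y -> #|Y| = k -> Y = Y0).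
Proof.
move=> e_irr; apply: (@RTS_iso_prod_iff (fun i => induced e (Ys i)) (fun i => val)).
- by move=> i; apply: val_inj.
- by move=> i a; apply: valP.
- by move=> i y yi; exists (exist _ y yi).
- by move=> i a b /=; case: eqP => [-> | //]; rewrite e_irr.
Qed.

End ProductOfParts.

Theorem theorem3p16 (T : finType) (e : rel T)
    (e_sym : symmetric e) (e_irr : irreflexive e)
    (x : {set {set T}} -> bool) (ismax : bool) (k : nat)
    (Hk : param_value x ismax k)
    (m : nat) (Ys : 'I_m -> {set T}) (Ys_inj : injective Ys)
    (HYpart : is_vpartition [set Ys i | i : 'I_m])
    (HYx : x [set Ys i | i : 'I_m])
    (HYk : #|[set Ys i | i : 'I_m]| = k) :
  [<-> graph_iso (RTE x k) (cart_prod_seq [seq Kgraph #|Ys i| | i <- enum 'I_m]);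
       graph_iso (RTS e x k) (cart_prod_seq [seq induced e (Ys i) | i <- enum 'I_m]);
       forall Y : {set {set T}}, is_vpartition Y -> x Y -> #|Y| = k ->
         Y = [set Ys i | i : 'I_m]].
Proof.
have tiY := partition_trivIset HYpart.
have Ys_disj i j y : y \in Ys i -> y \in Ys j -> i = j.
  move=> yi yj; apply: Ys_inj.
  by rewrite -(def_pblock tiY _ yi) ?imset_f // -(def_pblock tiY _ yj) ?imset_f.
have iffTE := RTE_iso_iff Ys_disj HYpart HYx HYk.
have iffTS := RTS_iso_iff Ys_disj HYpart HYx HYk e_irr.
by tfae=> [/iffTE/iffTS | /iffTS | /iffTE].
Qed.
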